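(* Let $G,H$ be connected graphs. If $\iota(G),\iota(H)<\infty$ then $\iota(G\,\Box\,H)=\iota(G)+\iota(H)$. If $\iota(G)=\infty$ or $\iota(H)=\infty$, then $\iota(G\,\Box\,H)=\infty$.
   Context: For a connected graph $G$ on vertices $v_1,\dots,v_n$, its distance matrix is $D=(d(v_i,v_j))_{i,j=1}^n$, where $d$ is the shortest-path distance; $\vec 1$ denotes the all-ones vector. $G$ is distance exceptional if $D\vec x=\vec 1$ has no solution. A curvature potential is a vector $\vec x$ with $D\vec x=\vec 1$. Curvature index $\iota(G)\in\mathbb{R}\cup\{\infty\}$: if $G$ is distance exceptional or has a curvature potential $\vec x$ with $\vec 1^\top\vec x\neq0$, then $\iota(G)$ is the unique real number with $\{D\vec x:\vec 1^\top\vec x=1\}\cap\mathbb{R}\vec 1=\{\iota(G)\vec 1\}$ (this intersection is a single point); otherwise (curvature potentials exist and all have $\vec 1^\top\vec x=0$) $\iota(G)=\infty$. The Cartesian product $G\,\Box\,H$ has vertex set $V(G)\times V(H)$, with $(u,v)\sim(u',v')$ iff either $u=u'$ and $\{v,v'\}\in E(H)$, or $v=v'$ and $\{u,u'\}\in E(G)$. *)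

From HB Require Import structures.
From mathcomp Require Import all_boot all_order all_algebra.
From Stdlib Require Import ClassicalEpsilon.
Set Implicit Arguments. Unset Strict Implicit. Unset Printing Implicit Defensive.
Import Order.TTheory GRing.Theory Num.Theory.
Local Open Scope ring_scope.

Section Graphs.
Variable T : finType.
Variable e : rel T.

Definition connected_graph : Prop :=
  [/\ symmetric e, irreflexive e, (0 < #|T|)%N & forall x y : T, connect e x y].

Fixpoint walk_of (n : nat) (x y : T) : bool :=
  if n is n'.+1 then [exists z, e x z && walk_of n' z y] else x == y.

(* shortest-path distance: least n with a walk of length n from x to y.
   In a connected graph such n exists and is < #|T|, so searching
   0 .. #|T|-1 is exact. *)
Definition gdist (x y : T) : nat := find (fun n => walk_of n x y) (iota 0 #|T|).

Variable R : realFieldType.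

Definition distmx_app (x : T -> R) : T -> R :=
  fun u => \sum_(v : T) (gdist u v)%:R * x v.

Definition has_curvature_potential : Prop :=
  exists x : T -> R, forall u, distmx_app x u = 1.

Definition distance_exceptional : Prop := ~ has_curvature_potential.

Definition index_value (t : R) : Prop :=
  forall s : R, (exists x : T -> R, \sum_(v : T) x v = 1 /\
                   forall u, distmx_app x u = s) <-> s = t.

(* curvature index, with None standing for +∞ *)
Definition curvature_index : option R :=
  if excluded_middle_informative
       (distance_exceptional \/
        exists x : T -> R, (forall u, distmx_app x u = 1) /\ \sum_(v : T) x v <> 0)
  then Some (epsilon (inhabits 0) index_value)
  else None.

End Graphs.

Definition boxrel (T1 T2 : finType) (e1 : rel T1) (e2 : rel T2) : rel (T1 * T2) :=
  fun p q => ((p.1 == q.1) && e2 p.2 q.2) || ((p.2 == q.2) && e1 p.1 q.1).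

Definition oadd (R : realFieldType) (a b : option R) : option R :=
  match a, b with Some x, Some y => Some (x + y) | _, _ => None end.

From HB Require Import structures.
From mathcomp Require Import all_boot all_order all_algebra.
From mathcomp Require Import ring.
From Stdlib Require Import ClassicalEpsilon.
Set Implicit Arguments. Unset Strict Implicit. Unset Printing Implicit Defensive.
Import Order.TTheory GRing.Theory Num.Theory.

(* Distances in G □ H add up: d((u,v),(u',v')) = d_G(u,u') + d_H(v,v').  Hence
   D_{G□H} x, for x on V(G) × V(H), splits as D_G of the marginal of x on V(G)
   plus D_H of its marginal on V(H).  Call t attained when D x = t·1 for some x
   with 1ᵀx = 1; by symmetry of D at most one t is attained, and the curvature
   index is finite exactly when some t is attained (in the exceptional case a
   kernel vector z of D with 1ᵀz ≠ 0 exists by Fredholm's alternative, and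
   attains 0).  Tensor products x ⊗ y of witnesses for G and H attain
   ι(G) + ι(H), and conversely marginals of a witness for G □ H are witnesses
   for G and for H. *)

Section Walks.
Variables (T : finType) (e : rel T).

Lemma walk_of_path x p : path e x p -> walk_of e (size p) x (last x p).
Proof.
elim: p x => [|y p IHp] x //= /andP[exy yp].
by apply/existsP; exists y; rewrite exy IHp.
Qed.

Lemma walk_of_connect n x y : walk_of e n x y -> connect e x y.
Proof.
elim: n x => [|n IHn] x /=; first by move/eqP->.
by case/existsP=> z /andP[exz /IHn]; apply: connect_trans (connect1 exz).
Qed.

Lemma walk_ofSr n x y : walk_of e n.+1 x y = [exists z, walk_of e n x z && e z y].
Proof.
elim: n x => [|n IHn] x.
  apply/existsP/existsP => [[z /andP[exz /eqP <-]]|[z /andP[/eqP <- ezy]]].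
    by exists x; rewrite /= eqxx.
  by exists y; rewrite /= eqxx andbT.
apply/existsP/existsP => [[z /andP[exz wzy]]|[w /andP[wxw ewy]]].
  have /existsP[w /andP[zw ewy]] : [exists w, walk_of e n z w && e w y].
    by rewrite -IHn.
  by exists w; rewrite ewy andbT; apply/existsP; exists z; rewrite exz.
have /existsP[z /andP[exz zw]] : [exists z, e x z && walk_of e n z w] := wxw.
exists z; rewrite exz; change (walk_of e n.+1 z y).
by rewrite IHn; apply/existsP; exists w; rewrite zw.
Qed.

Lemma walk_of_sym : symmetric e -> forall n x y, walk_of e n x y = walk_of e n y x.
Proof.
move=> esym; elim=> [|n IHn] x y; first by rewrite /= eq_sym.
rewrite walk_ofSr /=; apply/existsP/existsP => -[z /andP[h1 h2]];
  by exists z; rewrite IHn esym ?h1 ?h2.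
Qed.

Lemma connect_has_walk x y :
  connect e x y -> has (fun n => walk_of e n x y) (iota 0 #|T|).
Proof.
case/connectP=> p xp ->; have [q xq uq _] := shortenP xp.
apply/hasP; exists (size q); last exact: walk_of_path.
by rewrite mem_iota add0n -[_ < _]/(size (x :: q) <= _) -(card_uniqP uq) max_card.
Qed.

Lemma gdist_walk x y : connect e x y -> walk_of e (gdist e x y) x y.
Proof.
move/connect_has_walk=> hw; have lt_gdist := hw.
rewrite has_find size_iota in lt_gdist.
by have := nth_find 0 hw; rewrite nth_iota.
Qed.

Lemma gdist_min x y n : connect e x y -> walk_of e n x y -> (gdist e x y <= n)%N.
Proof.
move/connect_has_walk; rewrite has_find size_iota => ltd hw.
rewrite leqNgt; apply/negP => ltn.
by have := before_find 0 ltn; rewrite nth_iota ?add0n ?hw //; apply: ltn_trans ltd.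
Qed.

Lemma gdist_sym : symmetric e -> forall x y, gdist e x y = gdist e y x.
Proof. by move=> esym x y; apply: eq_find => n; apply: walk_of_sym. Qed.

End Walks.

Section BoxDistance.
Variables (T1 T2 : finType) (e1 : rel T1) (e2 : rel T2).

Lemma boxrel_sym : symmetric e1 -> symmetric e2 -> symmetric (boxrel e1 e2).
Proof. by move=> s1 s2 p q; rewrite /boxrel s1 s2 eq_sym [q.2 == _]eq_sym. Qed.

Lemma walk_of_box_split n p q : walk_of (boxrel e1 e2) n p q ->
  exists a b, [/\ n = (a + b)%N, walk_of e1 a p.1 q.1 & walk_of e2 b p.2 q.2].
Proof.
elim: n p => [|n IHn] p /=.
  by move/eqP->; exists 0%N, 0%N; rewrite /= !eqxx.
case/existsP=> z /andP[pz /IHn[a [b [-> w1 w2]]]].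
case/orP: pz => /andP[/eqP eq_z ez].
- exists a, b.+1; rewrite addnS eq_z; split=> //.
  by apply/existsP; exists z.2; rewrite ez.
- exists a.+1, b; rewrite addSn eq_z; split=> //.
  by apply/existsP; exists z.1; rewrite ez.
Qed.

Lemma walk_of_box a b u u' v v' :
  walk_of e1 a u u' -> walk_of e2 b v v' ->
  walk_of (boxrel e1 e2) (a + b) (u, v) (u', v').
Proof.
elim: a u => [|a IHa] u /=; last first.
  case/existsP=> z /andP[euz w1] w2; apply/existsP; exists (z, v).
  by rewrite /boxrel /= eqxx euz orbT IHa.
move/eqP<-; elim: b v => [|b IHb] v /=; first by move/eqP<-.
case/existsP=> z /andP[evz w2]; apply/existsP; exists (u, z).
by rewrite /boxrel /= eqxx evz IHb.
Qed.

Lemma gdist_box p q : connect e1 p.1 q.1 -> connect e2 p.2 q.2 ->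
  gdist (boxrel e1 e2) p q = (gdist e1 p.1 q.1 + gdist e2 p.2 q.2)%N.
Proof.
move=> c1 c2; have := walk_of_box (gdist_walk c1) (gdist_walk c2).
rewrite -!surjective_pairing => w; have c := walk_of_connect w.
apply/eqP; rewrite eqn_leq gdist_min //=.
have [a [b [-> w1 w2]]] := walk_of_box_split (gdist_walk c).
by rewrite leq_add // gdist_min.
Qed.

End BoxDistance.

Local Open Scope ring_scope.

Section CurvatureIndex.
Variables (T : finType) (e : rel T) (R : realFieldType).
Hypothesis esym : symmetric e.

Definition attains_index (t : R) : Prop :=
  exists x : T -> R, \sum_v x v = 1 /\ forall u, distmx_app e x u = t.

Lemma distmx_appZ (c : R) x u :
  distmx_app e (fun v => c * x v) u = c * distmx_app e x u.
Proof. by rewrite /distmx_app mulr_sumr; apply: eq_bigr => v _; rewrite mulrCA. Qed.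

Lemma distmx_app_adjoint (x y : T -> R) :
  \sum_u x u * distmx_app e y u = \sum_u y u * distmx_app e x u.
Proof.
rewrite /distmx_app; under eq_bigr do rewrite mulr_sumr.
rewrite exchange_big; apply: eq_bigr => v _; rewrite mulr_sumr.
by apply: eq_bigr => u _; rewrite gdist_sym //; ring.
Qed.

Lemma distmx_app_const_pairing (x y : T -> R) s t :
  (forall u, distmx_app e x u = s) -> (forall u, distmx_app e y u = t) ->
  (\sum_u x u) * t = (\sum_u y u) * s.
Proof.
move=> Dx Dy; rewrite !mulr_suml; have := distmx_app_adjoint x y.
by under eq_bigr do rewrite Dy; under [RHS]eq_bigr do rewrite Dx.
Qed.

Lemma attains_index_uniq s t : attains_index s -> attains_index t -> s = t.
Proof.
move=> [x [x1 Dx]] [y [y1 Dy]].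
by have := distmx_app_const_pairing Dy Dx; rewrite x1 y1 !mul1r.
Qed.

Lemma attains_index_normalize (x : T -> R) c :
  (forall u, distmx_app e x u = c) -> \sum_v x v != 0 ->
  attains_index (c / \sum_v x v).
Proof.
move=> Dx x0; exists (fun v => (\sum_w x w)^-1 * x v); split.
  by rewrite -mulr_sumr mulVf.
by move=> u; rewrite distmx_appZ Dx mulrC.
Qed.

Lemma sum_enum_rank (F : 'I_#|T| -> R) : \sum_i F i = \sum_(v : T) F (enum_rank v).
Proof.
by rewrite (reindex enum_rank) //; exists enum_val => i _; rewrite ?enum_rankK ?enum_valK.
Qed.

(* Fredholm alternative for the symmetric matrix D: if 1 is not in the row
   space of D, some column of the cokernel of D pairs nontrivially with 1. *)
Lemma distance_exceptional_kernel : distance_exceptional e R ->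
  exists z : T -> R, (forall u, distmx_app e z u = 0) /\ \sum_v z v != 0.
Proof.
move=> no_pot.
pose D : 'M[R]_#|T| := \matrix_(i, j) (gdist e (enum_val i) (enum_val j))%:R.
pose one : 'rV[R]_#|T| := const_mx 1.
have [/submxP[y yD]|one_notin] := boolP (one <= D)%MS.
  case: no_pot; exists (fun v => y 0 (enum_rank v)) => u.
  move/matrixP/(_ 0 (enum_rank u)): yD; rewrite mxE => ->.
  rewrite mxE sum_enum_rank; apply: eq_bigr => v _.
  by rewrite mxE !enum_rankK gdist_sym // mulrC.
have [j oneK] : exists j, (one *m cokermx D) 0 j != 0.
  apply/existsP; rewrite -negb_forall; apply: contra one_notin => /forallP oneK0.
  by rewrite submxE; apply/eqP/matrixP => i k; rewrite ord1 (eqP (oneK0 k)) mxE.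
exists (fun v => cokermx D (enum_rank v) j); split.
  move=> u; move/matrixP/(_ (enum_rank u) j): (mulmx_coker D).
  rewrite !mxE sum_enum_rank => <-; apply: eq_bigr => v _.
  by rewrite [D _ _]mxE !enum_rankK.
by move: oneK; rewrite mxE sum_enum_rank; under eq_bigr do rewrite mxE mul1r.
Qed.

Lemma exists_attains_indexP :
  (exists t, attains_index t) <->
  (distance_exceptional e R \/
   exists x : T -> R, (forall u, distmx_app e x u = 1) /\ \sum_v x v <> 0).
Proof.
split=> [[t [x [x1 Dx]]]|[no_pot|[x [Dx /eqP x0]]]].
- have [t0|t0] := eqVneq t 0.
    left=> -[w Dw]; have := distmx_app_const_pairing Dx Dw.
    by rewrite x1 t0 mulr0 mulr1; apply/eqP; rewrite oner_eq0.
  right; exists (fun v => t^-1 * x v); split.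
    by move=> u; rewrite distmx_appZ Dx mulVf.
  by rewrite -mulr_sumr x1 mulr1; apply/eqP; rewrite invr_eq0.
- have [z [Dz z0]] := distance_exceptional_kernel no_pot.
  by exists (0 / \sum_v z v); apply: attains_index_normalize Dz z0.
- by exists (1 / \sum_v x v); apply: attains_index_normalize Dx x0.
Qed.

Lemma curvature_index_Some t : curvature_index e R = Some t <-> attains_index t.
Proof.
have index_valueP s : attains_index s -> index_value e s.
  by move=> hs r; split=> [hr|->//]; apply: attains_index_uniq hr hs.
rewrite /curvature_index; case: excluded_middle_informative => [cond|ncond].
  have [s hs] := proj2 exists_attains_indexP cond.
  have := epsilon_spec (inhabits 0) _ (ex_intro _ s (index_valueP s hs)) s.
  case=> /(_ hs) <- _; split=> [[<-] //|ht]; congr Some.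
  exact: attains_index_uniq hs ht.
by split=> // ht; case: ncond; apply/exists_attains_indexP; exists t.
Qed.

Lemma curvature_index_None :
  curvature_index e R = None <-> forall t, ~ attains_index t.
Proof.
split=> [ci t /curvature_index_Some|none]; first by rewrite ci.
by case ci: curvature_index => [t|] //; have /curvature_index_Some := ci; move/none.
Qed.

End CurvatureIndex.

Section BoxIndex.
Variables (R : realFieldType) (T1 T2 : finType) (e1 : rel T1) (e2 : rel T2).
Hypotheses (conn1 : forall u u', connect e1 u u') (conn2 : forall v v', connect e2 v v').

Lemma sum_pair (F : T1 * T2 -> R) : \sum_p F p = \sum_u \sum_v F (u, v).
Proof. by rewrite pair_bigA; apply: eq_bigr => -[]. Qed.

Lemma distmx_app_box (x : T1 * T2 -> R) p :
  distmx_app (boxrel e1 e2) x p =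
  distmx_app e1 (fun u => \sum_v x (u, v)) p.1 +
  distmx_app e2 (fun v => \sum_u x (u, v)) p.2.
Proof.
rewrite /distmx_app sum_pair.
under eq_bigr do under eq_bigr do rewrite gdist_box // natrD mulrDl.
under eq_bigr do rewrite big_split /=.
rewrite big_split /= [X in _ + X]exchange_big /=.
by congr (_ + _); apply: eq_bigr => w _; rewrite mulr_sumr.
Qed.

Lemma attains_index_box (a b : R) :
  attains_index e1 a -> attains_index e2 b -> attains_index (boxrel e1 e2) (a + b).
Proof.
move=> [x [x1 Dx]] [y [y1 Dy]]; exists (fun p => x p.1 * y p.2); split.
  by rewrite sum_pair /=; under eq_bigr do rewrite -mulr_sumr y1 mulr1.
move=> p; rewrite distmx_app_box /distmx_app; congr (_ + _).
  by under eq_bigr do rewrite /= -mulr_sumr y1 mulr1; apply: Dx.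
by under eq_bigr do rewrite /= -mulr_suml x1 mul1r; apply: Dy.
Qed.

(* The marginal's D_G-image is constant because the other summand of
   D_{G□H} x is evaluated at one fixed vertex v0 of H. *)
Lemma attains_index_box_fst (v0 : T2) (s : R) :
  attains_index (boxrel e1 e2) s -> exists a : R, attains_index e1 a.
Proof.
move=> [x [x1 Dx]].
exists (s - distmx_app e2 (fun v => \sum_u x (u, v)) v0).
exists (fun u => \sum_v x (u, v)); split; first by rewrite -sum_pair.
by move=> u; rewrite -(Dx (u, v0)) distmx_app_box addrK.
Qed.

Lemma attains_index_box_snd (u0 : T1) (s : R) :
  attains_index (boxrel e1 e2) s -> exists b : R, attains_index e2 b.
Proof.
move=> [x [x1 Dx]].
exists (s - distmx_app e1 (fun u => \sum_v x (u, v)) u0).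
exists (fun v => \sum_u x (u, v)); split; first by rewrite exchange_big -sum_pair.
by move=> v; rewrite -(Dx (u0, v)) distmx_app_box /= addrC addKr.
Qed.

End BoxIndex.

Theorem theorem3p4 (R : realFieldType) (T1 T2 : finType) (e1 : rel T1) (e2 : rel T2) :
  connected_graph e1 -> connected_graph e2 ->
  (forall a b : R,
     curvature_index e1 R = Some a -> curvature_index e2 R = Some b ->
     curvature_index (boxrel e1 e2) R = Some (a + b)) /\
  ((curvature_index e1 R = None \/ curvature_index e2 R = None) ->
     curvature_index (boxrel e1 e2) R = None).
Proof.
move=> [s1 _ /card_gt0P[u0 _] conn1] [s2 _ /card_gt0P[v0 _] conn2].
have s12 := boxrel_sym s1 s2.
split=> [a b /(curvature_index_Some s1) ha /(curvature_index_Some s2) hb|].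
  exact/(curvature_index_Some s12)/attains_index_box.
move=> ci; apply/(curvature_index_None R s12) => t ht.
case: ci => [/(curvature_index_None R s1) none1|/(curvature_index_None R s2) none2].
- by have [a ha] := attains_index_box_fst conn1 conn2 v0 ht; apply: none1 ha.
- by have [b hb] := attains_index_box_snd conn1 conn2 u0 ht; apply: none2 hb.
Qed.
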